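(* Let $m=1$, $r\in(0,1]$ (publicly known), $\rho\in(0,1)$, and set $\alpha=\frac{\rho}{1-r\rho}$. Consider the direct mechanism that, on reports $b=(b_1,\dots,b_n)\in\mathbb{R}^n_{>0}$, allocates $x_i(b)=\frac{b_i^\alpha}{\sum_{k\in N}b_k^\alpha}$ to each agent $i$ and charges \[ p_i(b)=r\alpha\Big(\sum_{k\ne i}b_k^\alpha\Big)\int_0^{b_i}\frac{t^{r\alpha}}{\big(t^\alpha+\sum_{k\ne i}b_k^\alpha\big)^{r+1}}\,dt . \] Then (a) for any reports $b$, the allocation $x(b)$ lies in $\Psi(\rho)$ for the valuations $v_i(x)=b_i x^r$; and (b) the mechanism is truthful: for every agent $i$, every true weight $w_i>0$ and every $b_{-i}\in\mathbb{R}^{n-1}_{>0}$, the report $b_i=w_i$ maximizes $w_i\,x_i(b_{-i},b_i)^r-p_i(b_{-i},b_i)$ over all $b_i>0$ (indeed it is the unique maximizer).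
   Context: Single divisible good of supply 1; agent $i$'s true valuation is $v_i(x)=w_i x^r$ with $w_i>0$ (every differentiable, concave, monotone, homogeneous-of-degree-$r$ valuation of one good has this form). Utilities are quasilinear: value minus payment. $\Psi(\rho)$ is the set of allocations $(x_1,\dots,x_n)\ge 0$, $\sum_i x_i\le 1$, maximizing $(\sum_i v_i(x_i)^\rho)^{1/\rho}$. $(b_{-i},b_i')$ denotes the report vector with $i$th entry replaced by $b_i'$. *)

From Stdlib Require Import Reals Lra Lia.
From Coquelicot Require Import Coquelicot.
Open Scope R_scope.

(* Real power x^y for x >= 0 (with 0^y = 0); it is only ever applied to
   nonnegative bases and positive exponents here. *)
Definition rpow (x y : R) : R := if Rlt_dec 0 x then Rpower x y else 0.

(* sumR n f = f 0 + ... + f (n-1); agents are indexed 0, ..., n-1. *)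
Fixpoint sumR (n : nat) (f : nat -> R) : R :=
  match n with
  | O => 0
  | S k => sumR k f + f k
  end.

Definition feasible (n : nat) (x : nat -> R) : Prop :=
  (forall i, (i < n)%nat -> 0 <= x i) /\ sumR n x <= 1.

Definition rho_welfare (n : nat) (v : nat -> R -> R) (rho : R) (x : nat -> R) : R :=
  rpow (sumR n (fun i => rpow (v i (x i)) rho)) (1 / rho).

Definition in_Psi (n : nat) (v : nat -> R -> R) (rho : R) (x : nat -> R) : Prop :=
  feasible n x /\
  forall y, feasible n y -> rho_welfare n v rho y <= rho_welfare n v rho x.

Definition upd (b : nat -> R) (i : nat) (bi : R) : nat -> R :=
  fun k => if Nat.eqb k i then bi else b k.

Definition alloc (n : nat) (alpha : R) (b : nat -> R) (i : nat) : R :=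
  rpow (b i) alpha / sumR n (fun k => rpow (b k) alpha).

Definition others (n : nat) (alpha : R) (b : nat -> R) (i : nat) : R :=
  sumR n (fun k => if Nat.eqb k i then 0 else rpow (b k) alpha).

Definition pay (n : nat) (r alpha : R) (b : nat -> R) (i : nat) : R :=
  r * alpha * others n alpha b i *
  RInt (fun t => rpow t (r * alpha) / rpow (rpow t alpha + others n alpha b i) (r + 1))
       0 (b i).

Definition utility (n : nat) (r alpha w : R) (b : nat -> R) (i : nat) : R :=
  w * rpow (alloc n alpha b i) r - pay n r alpha b i.

From Stdlib Require Import Reals Lra Lia.
From Coquelicot Require Import Coquelicot.
Open Scope R_scope.

(* Put q = r rho and S = sum_k b_k^alpha.  Since
   alpha (1 - q) = rho, agent k contributes v_k(y)^rho = S^(1-q) x_k^(1-q) y^q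
   to the welfare sum, where x_k = b_k^alpha / S.  Weighted AM-GM bounds this
   by S^(1-q) ((1-q) x_k + q y) with equality at y = x_k; summing over a
   feasible y gives at most S^(1-q), which the allocation x attains.

   Facing the competition A = sum_{k<>i} b_k^alpha, the
   utility of reporting s is U(s) = w x(s)^r - r alpha A int_0^s p, where the
   payment density p is continuous on [0, +oo).  The payment is built so that
   U'(s) = (w - s) r alpha A p(s) / s, which is positive below w and negative
   above it; hence s = w is the unique maximizer when A > 0, while for A = 0
   (a lone agent) every report yields utility w. *)

Lemma rpow_pos (x y : R) : 0 < x -> rpow x y = Rpower x y.
Proof. intros Hx; unfold rpow; destruct (Rlt_dec 0 x); [reflexivity | lra]. Qed.

Lemma rpow_nonpos (x y : R) : x <= 0 -> rpow x y = 0.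
Proof. intros Hx; unfold rpow; destruct (Rlt_dec 0 x); [lra | reflexivity]. Qed.

Lemma rpow_ge0 (x y : R) : 0 <= rpow x y.
Proof.
  unfold rpow; destruct (Rlt_dec 0 x); [left; apply exp_pos | lra].
Qed.

Lemma rpow_gt0 (x y : R) : 0 < x -> 0 < rpow x y.
Proof. intros Hx; rewrite rpow_pos by exact Hx; apply exp_pos. Qed.

Lemma rpow_1 (x : R) : 0 <= x -> rpow x 1 = x.
Proof.
  intros [Hx | <-]; [rewrite rpow_pos by exact Hx; apply Rpower_1, Hx |].
  apply rpow_nonpos; lra.
Qed.

(* Because [rpow] vanishes on nonpositive bases, the exponent laws below
   need no positivity hypothesis on the base except for products. *)
Lemma rpow_rpow (x a c : R) : rpow (rpow x a) c = rpow x (a * c).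
Proof.
  destruct (Rlt_dec 0 x) as [Hx | Hx].
  - rewrite !rpow_pos by (try rewrite rpow_pos by exact Hx; auto; apply exp_pos).
    apply Rpower_mult.
  - rewrite !(rpow_nonpos x) by lra. apply rpow_nonpos; lra.
Qed.

Lemma rpow_plus (x a c : R) : rpow x (a + c) = rpow x a * rpow x c.
Proof.
  destruct (Rlt_dec 0 x) as [Hx | Hx].
  - rewrite !rpow_pos by exact Hx. apply Rpower_plus.
  - rewrite !rpow_nonpos by lra. ring.
Qed.

Lemma rpow_mult (x y c : R) : 0 <= x -> 0 <= y -> rpow (x * y) c = rpow x c * rpow y c.
Proof.
  intros [Hx | <-] [Hy | <-];
    try (rewrite Rmult_0_l || rewrite Rmult_0_r; rewrite !(rpow_nonpos 0) by lra; ring).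
  rewrite !rpow_pos by (try apply Rmult_lt_0_compat; assumption).
  symmetry; apply Rpower_mult_distr; assumption.
Qed.

Lemma rpow_lt (a c y : R) : 0 < y -> 0 <= a < c -> rpow a y < rpow c y.
Proof.
  intros Hy [[Ha | <-] Hac].
  - rewrite !rpow_pos by lra. apply Rlt_Rpower_l; lra.
  - rewrite (rpow_nonpos 0) by lra. apply rpow_gt0; lra.
Qed.

Lemma rpow_le (a c y : R) : 0 < y -> a <= c -> rpow a y <= rpow c y.
Proof.
  intros Hy Hac. destruct (Rle_lt_dec a 0) as [Ha | Ha].
  - rewrite (rpow_nonpos a) by exact Ha. apply rpow_ge0.
  - destruct Hac as [Hac | ->]; [left; apply rpow_lt; lra | lra].
Qed.

Lemma sumR_ext (n : nat) (f g : nat -> R) :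
  (forall k, (k < n)%nat -> f k = g k) -> sumR n f = sumR n g.
Proof.
  induction n as [| n IH]; simpl; intros H; [reflexivity |].
  rewrite IH by (intros; apply H; lia). rewrite H by lia. reflexivity.
Qed.

Lemma sumR_le (n : nat) (f g : nat -> R) :
  (forall k, (k < n)%nat -> f k <= g k) -> sumR n f <= sumR n g.
Proof.
  induction n as [| n IH]; simpl; intros H; [lra |].
  apply Rplus_le_compat; [apply IH; intros; apply H; lia | apply H; lia].
Qed.

Lemma sumR_linear (n : nat) (a c : R) (f g : nat -> R) :
  sumR n (fun k => a * f k + c * g k) = a * sumR n f + c * sumR n g.
Proof. induction n as [| n IH]; simpl; [ring | rewrite IH; ring]. Qed.

Lemma sumR_div (n : nat) (f : nat -> R) (c : R) :
  sumR n (fun k => f k / c) = sumR n f / c.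
Proof. induction n as [| n IH]; simpl; [unfold Rdiv; ring | rewrite IH; unfold Rdiv; ring]. Qed.

Lemma sumR_ge0 (n : nat) (f : nat -> R) :
  (forall k, (k < n)%nat -> 0 <= f k) -> 0 <= sumR n f.
Proof.
  induction n as [| n IH]; simpl; intros H; [lra |].
  apply Rplus_le_le_0_compat; [apply IH; intros; apply H; lia | apply H; lia].
Qed.

Lemma sumR_ge_term (n : nat) (f : nat -> R) (j : nat) :
  (forall k, (k < n)%nat -> 0 <= f k) -> (j < n)%nat -> f j <= sumR n f.
Proof.
  induction n as [| n IH]; intros H Hj; [lia |]. simpl.
  destruct (Nat.eq_dec j n) as [-> | Hne].
  - assert (0 <= sumR n f) by (apply sumR_ge0; intros; apply H; lia). lra.
  - assert (f j <= sumR n f) by (apply IH; [intros; apply H; lia | lia]).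
    assert (0 <= f n) by (apply H; lia). lra.
Qed.

Lemma sumR_split (n : nat) (f : nat -> R) (i : nat) : (i < n)%nat ->
  sumR n f = sumR n (fun k => if Nat.eqb k i then 0 else f k) + f i.
Proof.
  induction n as [| n IH]; intros Hi; [lia |]. simpl.
  destruct (Nat.eq_dec i n) as [-> | Hne].
  - rewrite Nat.eqb_refl, (sumR_ext n (fun k => if Nat.eqb k n then 0 else f k) f);
      [ring |]. intros k Hk. destruct (Nat.eqb_spec k n); [lia | reflexivity].
  - rewrite IH by lia. destruct (Nat.eqb_spec n i); [lia | ring].
Qed.

(* Convexity of exp, from the tangent-line bound exp t >= 1 + t at the
   barycentre. *)
Lemma exp_convex (q a c : R) : 0 <= q <= 1 ->
  exp (q * a + (1 - q) * c) <= q * exp a + (1 - q) * exp c.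
Proof.
  intros Hq. set (m := q * a + (1 - q) * c).
  assert (tangent : forall t, exp m * (1 + (t - m)) <= exp t).
  { intros t. replace (exp t) with (exp m * exp (t - m))
      by (rewrite <- exp_plus; f_equal; ring).
    apply Rmult_le_compat_l; [left; apply exp_pos | apply exp_ineq1_le]. }
  assert (barycentre : exp m = q * (exp m * (1 + (a - m)))
                               + (1 - q) * (exp m * (1 + (c - m)))) by (unfold m; ring).
  rewrite barycentre at 1.
  apply Rplus_le_compat; apply Rmult_le_compat_l; try lra; apply tangent.
Qed.

Lemma weighted_am_gm (q x y : R) : 0 <= q <= 1 -> 0 <= x -> 0 <= y ->
  rpow x (1 - q) * rpow y q <= (1 - q) * x + q * y.
Proof.
  intros Hq Hx Hy.
  destruct (Rle_lt_dec x 0) as [Hx0 | Hx0].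
  { rewrite (rpow_nonpos x) by exact Hx0. nra. }
  destruct (Rle_lt_dec y 0) as [Hy0 | Hy0].
  { rewrite (rpow_nonpos y) by exact Hy0. nra. }
  rewrite !rpow_pos by assumption. unfold Rpower. rewrite <- exp_plus.
  rewrite <- (exp_ln x) at 2 by exact Hx0. rewrite <- (exp_ln y) at 2 by exact Hy0.
  replace ((1 - q) * ln x + q * ln y) with (q * ln y + (1 - q) * ln x) by ring.
  replace ((1 - q) * exp (ln x) + q * exp (ln y))
    with (q * exp (ln y) + (1 - q) * exp (ln x)) by ring.
  apply exp_convex; exact Hq.
Qed.

Section Efficiency.

Variables r rho : R.
Hypothesis r_range : 0 < r <= 1.
Hypothesis rho_range : 0 < rho < 1.

Definition total_mass (n : nat) (b : nat -> R) : R :=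
  sumR n (fun k => rpow (b k) (rho / (1 - r * rho))).

Lemma r_rho_range : 0 < r * rho < 1.
Proof. split; nra. Qed.

(* With q = r rho and x = B^alpha / S, the agent's contribution at
   allocation y factors as S^(1-q) * (x^(1-q) y^q); weighted AM-GM then
   bounds it linearly in y, with equality at y = x. *)
Lemma welfare_term_factor (B S y : R) : 0 < B -> 0 < S -> 0 <= y ->
  rpow (B * rpow y r) rho =
  rpow S (1 - r * rho) *
  (rpow (rpow B (rho / (1 - r * rho)) / S) (1 - r * rho) * rpow y (r * rho)).
Proof.
  intros HB HS Hy. pose proof r_rho_range.
  assert (HBal := rpow_gt0 B (rho / (1 - r * rho)) HB).
  rewrite rpow_mult, rpow_rpow by (lra || apply rpow_ge0).
  replace (rpow B rho) with (rpow (rpow B (rho / (1 - r * rho))) (1 - r * rho))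
    by (rewrite rpow_rpow; f_equal; field; lra).
  replace (rpow B (rho / (1 - r * rho))) with (S * (rpow B (rho / (1 - r * rho)) / S)) at 1
    by (field; lra).
  rewrite rpow_mult; [ring | lra | apply Rdiv_le_0_compat; lra].
Qed.

Lemma alloc_sum (n : nat) (b : nat -> R) :
  0 < total_mass n b -> sumR n (alloc n (rho / (1 - r * rho)) b) = 1.
Proof.
  intros HS. unfold alloc. rewrite sumR_div.
  change (total_mass n b / total_mass n b = 1). field; lra.
Qed.

Lemma welfare_sum_le (n : nat) (b y : nat -> R) :
  (forall k, (k < n)%nat -> 0 < b k) -> 0 < total_mass n b -> feasible n y ->
  sumR n (fun k => rpow (b k * rpow (y k) r) rho) <= rpow (total_mass n b) (1 - r * rho).
Proof.
  intros Hb HS [Hy Hy1]. pose proof r_rho_range.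
  set (x := alloc n (rho / (1 - r * rho)) b).
  assert (Hx1 : sumR n x = 1) by apply alloc_sum, HS.
  set (S := total_mass n b) in *.
  apply Rle_trans with (sumR n (fun k =>
    (rpow S (1 - r * rho) * (1 - r * rho)) * x k + (rpow S (1 - r * rho) * (r * rho)) * y k)).
  - apply sumR_le. intros k Hk.
    rewrite (welfare_term_factor (b k) S) by (auto; lra).
    replace (rpow S (1 - r * rho) * (1 - r * rho) * x k + rpow S (1 - r * rho) * (r * rho) * y k)
      with (rpow S (1 - r * rho) * ((1 - (r * rho)) * x k + (r * rho) * y k)) by ring.
    apply Rmult_le_compat_l; [apply rpow_ge0 |].
    apply weighted_am_gm; [lra | unfold x, alloc; apply Rdiv_le_0_compat | auto].
    + apply rpow_ge0.
    + exact HS.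
  - rewrite sumR_linear, Hx1.
    assert (0 <= rpow S (1 - r * rho) * (r * rho) * (1 - sumR n y))
      by (repeat apply Rmult_le_pos; try apply rpow_ge0; lra).
    lra.
Qed.

Lemma welfare_sum_alloc (n : nat) (b : nat -> R) :
  (forall k, (k < n)%nat -> 0 < b k) -> 0 < total_mass n b ->
  sumR n (fun k => rpow (b k * rpow (alloc n (rho / (1 - r * rho)) b k) r) rho)
  = rpow (total_mass n b) (1 - r * rho).
Proof.
  intros Hb HS. pose proof r_rho_range.
  set (x := alloc n (rho / (1 - r * rho)) b).
  assert (Hx1 : sumR n x = 1) by apply alloc_sum, HS.
  set (S := total_mass n b) in *.
  rewrite (sumR_ext n _ (fun k => rpow S (1 - r * rho) * x k + 0 * x k)).
  - rewrite sumR_linear, Hx1. ring.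
  - intros k Hk. assert (0 <= x k)
      by (unfold x, alloc; apply Rdiv_le_0_compat; [apply rpow_ge0 | exact HS]).
    rewrite (welfare_term_factor (b k) S) by (auto; lra). rewrite <- rpow_plus. replace (1 - r * rho + r * rho) with 1 by ring.
    rewrite rpow_1 by assumption. ring.
Qed.

Lemma total_mass_pos (n : nat) (b : nat -> R) :
  (0 < n)%nat -> (forall k, (k < n)%nat -> 0 < b k) -> 0 < total_mass n b.
Proof.
  intros Hn Hb. apply Rlt_le_trans with (rpow (b 0%nat) (rho / (1 - r * rho))).
  - apply rpow_gt0, Hb, Hn.
  - apply (sumR_ge_term n (fun k => rpow (b k) _)); [intros; apply rpow_ge0 | exact Hn].
Qed.

Lemma alloc_in_Psi (n : nat) (b : nat -> R) : (forall k, (k < n)%nat -> 0 < b k) ->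
  in_Psi n (fun i x => b i * rpow x r) rho (alloc n (rho / (1 - r * rho)) b).
Proof.
  intros Hb. destruct n as [| n'].
  { split; [split; [intros; lia | simpl; lra] | intros y _; unfold rho_welfare; simpl; lra]. }
  assert (HS : 0 < total_mass (S n') b) by (apply total_mass_pos; [lia | exact Hb]).
  split; [split |].
  - intros i Hi. unfold alloc. apply Rdiv_le_0_compat; [apply rpow_ge0 | exact HS].
  - rewrite alloc_sum by exact HS. lra.
  - intros y Hy. unfold rho_welfare. apply rpow_le; [apply Rdiv_lt_0_compat; lra |].
    rewrite welfare_sum_alloc by assumption. apply welfare_sum_le; assumption.
Qed.

End Efficiency.

Lemma nondecreasing_of_deriv (f df : R -> R) (a b : R) : a <= b ->
  (forall x, a <= x <= b -> is_derive f x (df x)) ->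
  (forall x, a <= x <= b -> 0 <= df x) -> f a <= f b.
Proof.
  intros Hab Hd Hpos.
  destruct (MVT_gen f a b df) as [c [Hc Hmvt]];
    rewrite ?Rmin_left, ?Rmax_right in * by exact Hab.
  - intros x Hx. apply Hd; lra.
  - intros x Hx. apply continuity_pt_filterlim, (ex_derive_continuous (V := R_NormedModule)).
    exists (df x). apply Hd; lra.
  - assert (0 <= df c * (b - a)) by (apply Rmult_le_pos; [apply Hpos | ]; lra). lra.
Qed.

Lemma increasing_of_deriv (f df : R -> R) (a b : R) : a < b ->
  (forall x, a <= x <= b -> is_derive f x (df x)) ->
  (forall x, a <= x <= b -> 0 <= df x) ->
  (forall x, a < x < b -> 0 < df x) -> f a < f b.
Proof.
  intros Hab Hd Hnn Hpos.
  set (m1 := (2 * a + b) / 3). set (m2 := (a + 2 * b) / 3).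
  assert (left_part : f a <= f m1)
    by (apply (nondecreasing_of_deriv f df); unfold m1 in *; intros; try apply Hd; try apply Hnn; lra).
  assert (middle_part : f m1 < f m2).
  { apply (incr_function_le f (Finite m1) (Finite m2) df); simpl; unfold m1, m2 in *;
      intros; try apply Hd; try apply Hpos; lra. }
  assert (right_part : f m2 <= f b)
    by (apply (nondecreasing_of_deriv f df); unfold m2 in *; intros; try apply Hd; try apply Hnn; lra).
  lra.
Qed.

Lemma rpow_continuous (c x : R) : 0 < c -> 0 <= x -> continuous (fun t => rpow t c) x.
Proof.
  intros Hc [Hx | <-].
  - apply continuous_ext_loc with (fun t => exp (c * ln t)).
    + apply locally_interval with (a := Finite 0) (b := p_infty); simpl; auto.
      intros t Ht _. rewrite rpow_pos by exact Ht. reflexivity.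
    + apply (ex_derive_continuous (V := R_NormedModule)). auto_derive. exact Hx.
  - unfold continuous. rewrite (rpow_nonpos 0) by lra.
    apply filterlim_locally. intros eps.
    assert (Hd : 0 < rpow eps (/ c)) by apply rpow_gt0, cond_pos.
    apply locally_interval with (a := Finite (-1)) (b := Finite (rpow eps (/ c))); simpl;
      try lra.
    intros t _ Ht. change (Rabs (rpow t c - 0) < eps).
    rewrite Rminus_0_r, Rabs_pos_eq by apply rpow_ge0.
    destruct (Rle_lt_dec t 0) as [Ht0 | Ht0].
    + rewrite rpow_nonpos by exact Ht0. apply cond_pos.
    + replace (pos eps) with (rpow (rpow eps (/ c)) c).
      * apply rpow_lt; lra.
      * rewrite rpow_rpow, Rinv_l, rpow_1 by (lra || (left; apply cond_pos)). reflexivity.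
Qed.

(* Agent i's view of the mechanism when the other reports contribute the
   competition A = sum_{k<>i} b_k^alpha and it reports s: its share x(s),
   the integrand p of its payment, and its utility U(s) with true weight w. *)
Definition own_share (al A s : R) : R := rpow s al / (A + rpow s al).

Definition pay_density (r al A t : R) : R :=
  rpow t (r * al) / rpow (rpow t al + A) (r + 1).

Definition report_utility (r al A w s : R) : R :=
  w * rpow (own_share al A s) r - r * al * A * RInt (pay_density r al A) 0 s.

Section ReportUtility.

Variables r al A : R.
Hypothesis r_pos : 0 < r.
Hypothesis al_pos : 0 < al.
Hypothesis A_pos : 0 < A.

Lemma pay_density_continuous (t : R) : 0 <= t -> continuous (pay_density r al A) t.
Proof.
  intros Ht. unfold pay_density, Rdiv.
  assert (Hbase : 0 < rpow t al + A) by (pose proof (rpow_ge0 t al); lra).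
  apply (continuous_mult (K := R_AbsRing)).
  - apply rpow_continuous; [nra | exact Ht].
  - apply continuous_Rinv_comp; [| apply Rgt_not_eq, rpow_gt0, Hbase].
    apply (continuous_comp (fun t => rpow t al + A) (fun u => rpow u (r + 1))).
    + apply (continuous_plus (V := R_NormedModule)); [apply rpow_continuous; auto |].
      apply continuous_const.
    + apply rpow_continuous; lra.
Qed.

Lemma pay_density_integrable (s : R) : 0 <= s -> ex_RInt (pay_density r al A) 0 s.
Proof.
  intros Hs. apply (ex_RInt_continuous (V := R_CompleteNormedModule)).
  rewrite Rmin_left, Rmax_right by lra. intros t Ht. apply pay_density_continuous; lra.
Qed.

Lemma pay_density_pos (t : R) : 0 < t -> 0 < pay_density r al A t.
Proof.
  intros Ht. unfold pay_density.
  apply Rdiv_lt_0_compat; apply rpow_gt0; [exact Ht |].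
  pose proof (rpow_ge0 t al). lra.
Qed.

(* Closed forms on (0, +oo) through exp and ln, amenable to differentiation. *)
Lemma pay_density_exp (t : R) : 0 < t ->
  pay_density r al A t = exp (r * al * ln t) / exp ((r + 1) * ln (exp (al * ln t) + A)).
Proof.
  intros Ht. unfold pay_density. rewrite (rpow_pos t al), (rpow_pos t) by exact Ht.
  unfold Rpower. rewrite rpow_pos by (pose proof (exp_pos (al * ln t)); lra). reflexivity.
Qed.

Lemma own_share_pow_exp (s : R) : 0 < s ->
  rpow (own_share al A s) r = exp (r * al * ln s) / exp (r * ln (A + exp (al * ln s))).
Proof.
  intros Hs. unfold own_share. rewrite (rpow_pos s al) by exact Hs. unfold Rpower.
  pose proof (exp_pos (al * ln s)).
  rewrite rpow_pos by (apply Rdiv_lt_0_compat; lra). unfold Rpower.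
  rewrite ln_div, ln_exp by lra.
  replace (r * (al * ln s - ln (A + exp (al * ln s))))
    with (r * al * ln s + - (r * ln (A + exp (al * ln s)))) by ring.
  rewrite exp_plus, exp_Ropp. reflexivity.
Qed.

(* The payment rule is designed
   exactly so that this identity makes truth-telling optimal. *)
Lemma own_share_pow_derive (s : R) : 0 < s ->
  is_derive (fun s => rpow (own_share al A s) r) s (r * al * A * pay_density r al A s / s).
Proof.
  intros Hs.
  apply is_derive_ext_loc with
    (fun s => exp (r * al * ln s) / exp (r * ln (A + exp (al * ln s)))).
  { apply locally_interval with (a := Finite 0) (b := p_infty); simpl; auto.
    intros t Ht _. symmetry. apply own_share_pow_exp, Ht. }
  rewrite pay_density_exp by exact Hs.
  pose proof (exp_pos (al * ln s)). auto_derive.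
  - repeat split; try lra. apply Rgt_not_eq, exp_pos.
  - set (P := exp (al * ln s)) in *.
    replace ((r + 1) * ln (P + A)) with (r * ln (P + A) + ln (P + A)) by ring.
    rewrite exp_plus, exp_ln by lra. rewrite (Rplus_comm P A).
    pose proof (exp_pos (r * ln (A + P))). field. repeat split; lra.
Qed.

Lemma report_utility_derive (w s : R) : 0 < s ->
  is_derive (report_utility r al A w) s ((w - s) * (r * al * A * pay_density r al A s / s)).
Proof.
  intros Hs.
  assert (Hint : is_derive (fun s => RInt (pay_density r al A) 0 s) s (pay_density r al A s)).
  { apply (is_derive_RInt (V := R_NormedModule) _ _ 0).
    - apply locally_interval with (a := Finite 0) (b := p_infty); simpl; auto.
      intros t Ht _. apply (RInt_correct (V := R_CompleteNormedModule)),
        pay_density_integrable; lra.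
    - apply pay_density_continuous; lra. }
  unfold report_utility.
  evar (d : R). replace ((w - s) * _) with d; unfold d.
  - apply (is_derive_minus (V := R_NormedModule)).
    + apply (is_derive_scal (fun s => rpow (own_share al A s) r)), own_share_pow_derive, Hs.
    + apply (is_derive_scal (fun s => RInt (pay_density r al A) 0 s)), Hint.
  - unfold minus, plus, opp, scal; simpl. unfold mult; simpl. field. lra.
Qed.

(* Against competition A > 0, truthful reporting is the unique best report:
   the derivative (w - s) * (positive) changes sign exactly at s = w. *)
Lemma report_utility_strict_max (w s : R) : 0 < w -> 0 < s -> s <> w ->
  report_utility r al A w s < report_utility r al A w w.
Proof.
  intros Hw Hs Hne.
  set (k := fun c => r * al * A * pay_density r al A c / c).
  assert (Hk : forall c, 0 < c -> 0 < k c).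
  { intros c Hc. unfold k. apply Rdiv_lt_0_compat; [| exact Hc].
    apply Rmult_lt_0_compat; [repeat apply Rmult_lt_0_compat; assumption |].
    apply pay_density_pos, Hc. }
  destruct (Rlt_or_le s w) as [Hlt | Hge].
  - apply (increasing_of_deriv _ (fun c => (w - c) * k c)); [exact Hlt | | |].
    + intros x Hx. apply report_utility_derive; lra.
    + intros x Hx. apply Rmult_le_pos; [lra | left; apply Hk; lra].
    + intros x Hx. apply Rmult_lt_0_compat; [lra | apply Hk; lra].
  - apply Ropp_lt_cancel.
    apply (increasing_of_deriv (fun c => - report_utility r al A w c) (fun c => - ((w - c) * k c)));
      [lra | | |].
    + intros x Hx. apply (is_derive_opp (report_utility r al A w)), report_utility_derive; lra.
    + intros x Hx. assert (0 <= (x - w) * k x) by (apply Rmult_le_pos; [lra | left; apply Hk; lra]).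
      lra.
    + intros x Hx. assert (0 < (x - w) * k x) by (apply Rmult_lt_0_compat; [lra | apply Hk; lra]).
      lra.
Qed.

End ReportUtility.

Lemma report_utility_alone (r al w s : R) : 0 < s -> report_utility r al 0 w s = w.
Proof.
  intros Hs. unfold report_utility, own_share. rewrite Rplus_0_l, Rdiv_diag.
  - rewrite rpow_pos by lra. unfold Rpower. rewrite ln_1, Rmult_0_r, exp_0. ring.
  - apply Rgt_not_eq, rpow_gt0, Hs.
Qed.

Lemma upd_same (b : nat -> R) (i : nat) (s : R) : upd b i s i = s.
Proof. unfold upd. rewrite Nat.eqb_refl. reflexivity. Qed.

Lemma others_upd (n : nat) (al : R) (b : nat -> R) (i : nat) (s : R) :
  others n al (upd b i s) i = others n al b i.
Proof.
  unfold others. apply sumR_ext. intros k _. unfold upd.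
  destruct (Nat.eqb k i); reflexivity.
Qed.

Lemma utility_upd (n : nat) (r al w : R) (b : nat -> R) (i : nat) (s : R) : (i < n)%nat ->
  utility n r al w (upd b i s) i = report_utility r al (others n al b i) w s.
Proof.
  intros Hi. unfold utility, pay, alloc, report_utility, own_share.
  rewrite others_upd, upd_same, (sumR_split n _ i Hi), upd_same.
  fold (others n al (upd b i s) i). rewrite others_upd. reflexivity.
Qed.

Lemma others_ge0 (n : nat) (al : R) (b : nat -> R) (i : nat) : 0 <= others n al b i.
Proof.
  apply sumR_ge0. intros k _. destruct (Nat.eqb k i); [lra | apply rpow_ge0].
Qed.

Lemma others_pos (n : nat) (al : R) (b : nat -> R) (i : nat) :
  (2 <= n)%nat -> (forall k, (k < n)%nat -> 0 < b k) -> 0 < others n al b i.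
Proof.
  intros Hn Hb. set (j := if Nat.eqb i 0 then 1%nat else 0%nat).
  assert (Hj : (j < n)%nat /\ Nat.eqb j i = false).
  { unfold j. destruct (Nat.eqb_spec i 0); split; try lia; apply Nat.eqb_neq; lia. }
  destruct Hj as [Hj Hji].
  apply Rlt_le_trans with ((fun k => if Nat.eqb k i then 0 else rpow (b k) al) j).
  - cbv beta. rewrite Hji. apply rpow_gt0, Hb, Hj.
  - apply (sumR_ge_term n (fun k => if Nat.eqb k i then 0 else rpow (b k) al) j); [| exact Hj].
    intros k _. destruct (Nat.eqb k i); [lra | apply rpow_ge0].
Qed.

Theorem mainTheorem6 (n : nat) (r rho : R) :
  0 < r <= 1 -> 0 < rho < 1 ->
  let alpha := rho / (1 - r * rho) in
  (* (a) the allocation lies in Psi(rho) for valuations v_i(x) = b_i x^r *)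
  (forall b : nat -> R, (forall k, (k < n)%nat -> 0 < b k) ->
     in_Psi n (fun i x => b i * rpow x r) rho (alloc n alpha b)) /\
  (* (b) truthfulness *)
  (forall (i : nat) (w : R) (b : nat -> R),
     (i < n)%nat -> 0 < w -> (forall k, (k < n)%nat -> 0 < b k) ->
     forall bi : R, 0 < bi ->
       utility n r alpha w (upd b i bi) i <= utility n r alpha w (upd b i w) i) /\
  (* uniqueness of the maximizer (requires at least two agents) *)
  ((2 <= n)%nat ->
   forall (i : nat) (w : R) (b : nat -> R),
     (i < n)%nat -> 0 < w -> (forall k, (k < n)%nat -> 0 < b k) ->
     forall bi : R, 0 < bi -> bi <> w ->
       utility n r alpha w (upd b i bi) i < utility n r alpha w (upd b i w) i).
Proof.
  intros Hr Hrho alpha.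
  assert (Hal : 0 < alpha) by (unfold alpha; apply Rdiv_lt_0_compat; nra).
  split; [| split].
  - intros b Hb. apply alloc_in_Psi; assumption.
  - intros i w b Hi Hw Hb bi Hbi. rewrite !utility_upd by exact Hi.
    destruct (others_ge0 n alpha b i) as [HA | HA].
    + destruct (Req_dec bi w) as [-> | Hne]; [lra |].
      left. apply report_utility_strict_max; lra.
    + rewrite <- HA, !report_utility_alone by assumption. lra.
  - intros Hn i w b Hi Hw Hb bi Hbi Hne. rewrite !utility_upd by exact Hi.
    apply report_utility_strict_max; try lra. apply others_pos; assumption.
Qed.
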